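(* (1) For every $k\geq 1$, every orderable $k$-hypergraph is separable. (2) For $k=1,2$, every separable $k$-hypergraph is orderable; but for each $k\geq 3$ there exists a separable $k$-hypergraph that is not orderable.
   Context: A $k$-hypergraph on a finite set $V$ is a set $\mathcal{H}$ of $k$-element subsets of $V$. Let $n=|V|$. $\mathcal{H}$ is orderable if there is an ordering $v_1,\dots,v_n$ of $V$ such that each $v_i$ is either dominating, meaning $E\in\mathcal{H}$ for every $k$-set $E$ with $v_i\in E\subseteq\{v_1,\dots,v_i\}$, or isolating, meaning $E\notin\mathcal{H}$ for every $k$-set $E$ with $v_i\in E\subseteq\{v_1,\dots,v_i\}$. $\mathcal{H}$ is separable if there is a labeling $a:V\to\mathbb{Z}$ such that $\mathcal{H}=\{E\subseteq V:|E|=k,\ \sum_{v\in E}a(v)\geq 0\}$. *)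

From HB Require Import structures.
From mathcomp Require Import all_boot all_order all_algebra.
Set Implicit Arguments. Unset Strict Implicit. Unset Printing Implicit Defensive.
Import Order.TTheory GRing.Theory Num.Theory.

Definition is_hypergraph (V : finType) (k : nat) (H : {set {set V}}) : Prop :=
  forall E, E \in H -> #|E| = k.

(* v is dominating w.r.t. the prefix P (= {v_1,...,v_i}, with v = v_i). *)
Definition dominating (V : finType) (k : nat) (H : {set {set V}})
    (P : seq V) (v : V) : Prop :=
  forall E : {set V}, #|E| = k -> v \in E -> {subset E <= P} -> E \in H.

Definition isolating (V : finType) (k : nat) (H : {set {set V}})
    (P : seq V) (v : V) : Prop :=
  forall E : {set V}, #|E| = k -> v \in E -> {subset E <= P} -> E \notin H.

Definition orderable (V : finType) (k : nat) (H : {set {set V}}) : Prop :=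
  exists s : seq V, [/\ uniq s, (forall v, v \in s) &
    forall s1 v s2, s = s1 ++ v :: s2 ->
      dominating k H (rcons s1 v) v \/ isolating k H (rcons s1 v) v].

Definition separable (V : finType) (k : nat) (H : {set {set V}}) : Prop :=
  exists a : V -> int,
    H = [set E : {set V} | (#|E| == k) && (0 <= \sum_(v in E) a v)%R].

From mathcomp Require Import all_boot all_order all_algebra.
From mathcomp Require Import zify lra.
Set Implicit Arguments. Unset Strict Implicit. Unset Printing Implicit Defensive.
Import Order.TTheory GRing.Theory Num.Theory.

(* Given an ordering v_1, ..., v_n, give v_i the weight 2^i, positive if v_i
   is dominating and negative if it is isolating: the last vertex of a k-set
   outweighs all the others together, so the sign of the sum decides
   membership exactly as the ordering does.
   Conversely, for k = 2 sort the vertices of a separable graph by |a v|,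
   nonnegative weights last among ties: then v is dominating or isolating
   according to the sign of a v, since a v decides the sign of a v + a u for
   every earlier u.
   For k >= 3, take k vertices of weight 1 and k of weight -1: every vertex
   lies both in an edge and in a non-edge (its own side, or itself together
   with k - 1 vertices of the other side), so the last vertex of an ordering
   can be neither dominating nor isolating. *)

Lemma sum_expn2_lt (T : finType) (A : {set T}) (f : T -> nat) m :
  {in A &, injective f} -> (forall x, x \in A -> f x < m) ->
  \sum_(x in A) 2 ^ f x < 2 ^ m.
Proof.
elim: m A => [|m IHm] A f_inj f_lt.
  by rewrite big_pred0 // => x; apply/negbTE/negP => /f_lt.
rewrite expnS mul2n -addnn.
case: (pickP [pred x in A | f x == m]) => [x /andP[xA /eqP fx] | no_m].
  rewrite (big_setD1 x xA) fx ltn_add2l IHm //.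
    by apply: sub_in2 f_inj => y /setD1P[].
  move=> y /setD1P[yx yA]; rewrite ltn_neqAle -ltnS f_lt // andbT.
  by apply: contra yx => /eqP fy; apply/eqP/f_inj; rewrite ?fx.
rewrite ltn_addr // IHm // => x xA; rewrite ltn_neqAle -ltnS f_lt // andbT.
by apply: contraT; rewrite negbK => fx; have := no_m x; rewrite /= xA fx.
Qed.

Lemma ge0_addr_norm_lt (R : realDomainType) (x y : R) :
  (`|y| < `|x| -> (0 <= x + y) = (0 <= x))%R.
Proof.
rewrite ltr_norml => /andP[]; case: (lerP 0 x) => [x_ge0|x_lt0].
  by rewrite ger0_norm // => ? _; apply/idP; lra.
by rewrite ltr0_norm // => _ ?; apply/negbTE; rewrite -ltNge; lra.
Qed.

Section OrderableSeparable.

Local Open Scope ring_scope.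

Variables (V : finType) (k : nat) (H : {set {set V}}) (s : seq V).
Hypotheses (H_k : is_hypergraph k H) (s_all : forall v, v \in s).
Hypothesis s_ordering : forall s1 v s2, s = s1 ++ v :: s2 ->
  dominating k H (rcons s1 v) v \/ isolating k H (rcons s1 v) v.

Definition prefix v := take (index v s).+1 s.

Lemma mem_prefix x v : (x \in prefix v) = (index x s <= index v s)%N.
Proof. by rewrite in_take. Qed.

Lemma index_inj : injective (index^~ s).
Proof. by move=> x y eq_xy; rewrite -[x](nth_index x (s_all x)) eq_xy nth_index. Qed.

Lemma prefix_dominating_or_isolating v :
  dominating k H (prefix v) v \/ isolating k H (prefix v) v.
Proof.
have v_lt : (index v s < size s)%N by rewrite index_mem.
rewrite /prefix (take_nth v v_lt) nth_index //; apply: s_ordering.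
by rewrite -[LHS](cat_take_drop (index v s)) (drop_nth v v_lt) nth_index.
Qed.

(* A decidable stand-in for "v is dominating": it fails exactly when v is
   isolating. *)
Definition prefix_edge v : bool :=
  [exists E in H, (v \in E) && [forall x in E, x \in prefix v]].

Definition weight v : int :=
  if prefix_edge v then (2 ^ index v s)%N%:R else - (2 ^ index v s)%N%:R.

Lemma ge0_sum_weight (E : {set V}) v : v \in E ->
    (forall x, x \in E -> index x s <= index v s)%N ->
  (0 <= \sum_(x in E) weight x) = prefix_edge v.
Proof.
move=> vE v_top; have norm_weight x : `|weight x| = (2 ^ index x s)%N%:R.
  by rewrite /weight; case: prefix_edge; rewrite ?normrN normr_nat.
rewrite (big_setD1 v vE) /= ge0_addr_norm_lt.
  by rewrite /weight; case: prefix_edge; rewrite ?oppr_ge0 ?ler0n ?lern0 ?expn_eq0.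
apply: le_lt_trans (ler_norm_sum _ _ _) _.
rewrite norm_weight (eq_bigr _ (fun x _ => norm_weight x)) -natr_sum ltr_nat.
apply: sum_expn2_lt => [x y _ _ /index_inj //|x /setD1P[xv xE]].
by rewrite ltn_neqAle v_top // andbT; apply: contra xv => /eqP/index_inj ->.
Qed.

Lemma edge_prefix_edge (E : {set V}) v : #|E| = k -> v \in E ->
  (forall x, x \in E -> index x s <= index v s)%N -> (E \in H) = prefix_edge v.
Proof.
move=> E_k vE v_top; apply/idP/existsP => [EH | [F /and3P[FH vF /forall_inP F_pre]]].
  by exists E; rewrite EH vE; apply/forall_inP => x /v_top; rewrite mem_prefix.
case: (prefix_dominating_or_isolating v) => [dom | iso].
  by apply: dom => // x /v_top; rewrite mem_prefix.
by have := iso F (H_k FH) vF F_pre; rewrite FH.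
Qed.

Lemma ordering_separable : (0 < k)%N -> separable k H.
Proof.
move=> k_gt0; exists weight; apply/setP => E; rewrite inE.
have [E_k | ] := eqVneq #|E| k; last by apply: contraNF => /H_k ->.
have [|v vE v_top] := @eq_bigmax_cond _ (pred_of_set E) (index^~ s).
  by rewrite E_k.
have {}v_top x : x \in E -> (index x s <= index v s)%N.
  by move=> xE; rewrite -v_top; apply: leq_bigmax_cond.
by rewrite (edge_prefix_edge E_k vE v_top) (ge0_sum_weight vE v_top).
Qed.

End OrderableSeparable.

Lemma orderable1 (V : finType) (H : {set {set V}}) : orderable 1 H.
Proof.
exists (enum V); split=> [|v|s1 v s2 _]; rewrite ?enum_uniq ?mem_enum //.
have E_v (E : {set V}) : #|E| = 1 -> v \in E -> E = [set v].
  by move/eqP/cards1P=> [x ->] /set1P ->.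
by case: (boolP ([set v] \in H)) => vH; [left | right] => E /E_v Ev /Ev ->.
Qed.

Lemma sorted_cat_cons_rel (T : eqType) (r : rel T) s1 v s2 :
  transitive r -> sorted r (s1 ++ v :: s2) -> {in s1, forall u, r u v}.
Proof.
move=> r_tr; rewrite sorted_pairwise // pairwise_cat allrel_consr.
by case/and3P=> /andP[/allP].
Qed.

Lemma cards2_mem (T : finType) (E : {set T}) v : #|E| = 2 -> v \in E ->
  exists2 u, u != v & E = [set v; u].
Proof.
move=> E2 vE; have /cards1P[u Ev] : #|E :\ v| == 1.
  by move: E2; rewrite (cardsD1 v) vE add1n => -[->].
have /setD1P[uv _] : u \in E :\ v by rewrite Ev set11.
by exists u; rewrite // -Ev setD1K.
Qed.

Definition sign_key (x : int) : nat := (`|x|.*2 + (0 <= x)%R)%N.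

Lemma ge0_add_sign_key (x y : int) :
  sign_key y <= sign_key x -> (0 <= x + y)%R = (0 <= x)%R.
Proof. rewrite /sign_key; case: (lerP 0 x); case: (lerP 0 y) => /=; lia. Qed.

Lemma separable2_orderable (V : finType) (H : {set {set V}}) :
  separable 2 H -> orderable 2 H.
Proof.
move=> [a ->]; pose le u v := sign_key (a u) <= sign_key (a v).
have le_tr : transitive le by move=> u v w; apply: leq_trans.
have le_total : total le by move=> u v; apply: leq_total.
exists (sort le (enum V)); split=> [|v|s1 v s2 s_eq].
- by rewrite sort_uniq enum_uniq.
- by rewrite mem_sort mem_enum.
have le_v : {in s1, forall u, le u v}.
  by apply: (sorted_cat_cons_rel (s2 := s2) le_tr); rewrite -s_eq sort_sorted.
have sum_edge (E : {set V}) : #|E| = 2 -> v \in E -> {subset E <= rcons s1 v} ->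
    (0 <= \sum_(x in E) a x)%R = (0 <= a v)%R.
  move=> /cards2_mem E2 /E2[u uv ->] E_pre.
  have /le_v le_uv : u \in s1.
    by have := E_pre u (set22 v u); rewrite mem_rcons inE (negbTE uv).
  by rewrite big_setU1 ?big_set1 ?inE 1?eq_sym //= ge0_add_sign_key.
by case: (boolP (0 <= a v)%R) => av; [left | right] => E E2 vE E_pre;
  rewrite inE E2 eqxx sum_edge ?av.
Qed.

Lemma orderable_last_vertex (V : finType) (k : nat) (H : {set {set V}}) (x0 : V) :
  orderable k H -> exists v : V,
    (forall E : {set V}, #|E| = k -> v \in E -> E \in H) \/
    (forall E : {set V}, #|E| = k -> v \in E -> E \notin H).
Proof.
case=> s [_ s_all s_ordering]; case/lastP: s s_all s_ordering => [/(_ x0) //|s v].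
move=> s_all /(_ s v [::]); rewrite cats1 => /(_ erefl) dom_iso; exists v.
by case: dom_iso => [dom|iso]; [left | right] => E E_k vE;
  [apply: dom | apply: iso] => // x _; apply: s_all.
Qed.

Section Counterexample.

Local Open Scope ring_scope.

Variable k : nat.
Hypothesis k_ge3 : (3 <= k)%N.

Definition vertex := (bool * 'I_k)%type.

Definition sign (b : bool) : int := if b then 1 else -1.

Definition balanced : {set {set vertex}} :=
  [set E : {set vertex} | (#|E| == k) && (0 <= \sum_(x in E) sign x.1)].

Definition side (b : bool) (I : {set 'I_k}) : {set vertex} := [set (b, i) | i in I].

Lemma card_side b I : #|side b I| = #|I|.
Proof. by rewrite card_imset // => i j []. Qed.

Lemma sum_side b I : \sum_(x in side b I) sign x.1 = sign b *+ #|I|.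
Proof. by rewrite big_imset /= ?sumr_const // => i j _ _ []. Qed.

Lemma balanced_hypergraph : is_hypergraph k balanced.
Proof. by move=> E; rewrite inE => /andP[/eqP]. Qed.

Lemma separable_balanced : separable k balanced.
Proof. by exists (fun x => sign x.1). Qed.

Lemma not_orderable_balanced : ~ orderable k balanced.
Proof.
have x0 : vertex by split; [exact: true | exact: Ordinal (ltnW k_ge3)].
move=> /(orderable_last_vertex x0)[[b i]].
have iE2 : (b, i) \notin side (~~ b) [set~ i] by apply/imsetP => -[j _ []]; case: b.
pose E1 := side b setT; pose E2 := (b, i) |: side (~~ b) [set~ i].
have E1_k : #|E1| = k by rewrite card_side cardsT card_ord.
have E2_k : #|E2| = k.
  by rewrite cardsU1 iE2 card_side cardsC1 card_ord add1n prednK // (ltn_trans _ k_ge3).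
have E1H : (E1 \in balanced) = b.
  by rewrite inE E1_k eqxx sum_side cardsT card_ord; case: (b) => /=; lia.
have E2H : (E2 \in balanced) = ~~ b.
  rewrite inE E2_k eqxx big_setU1 //= sum_side cardsC1 card_ord.
  by case: (b) => /=; lia.
have iE1 : (b, i) \in E1 by apply/imsetP; exists i.
case=> [dom | iso].
- by have := dom E2 E2_k (setU11 _ _); have := dom E1 E1_k iE1; rewrite E1H E2H => ->.
- by have := iso E2 E2_k (setU11 _ _); have := iso E1 E1_k iE1; rewrite E1H E2H => ->.
Qed.

End Counterexample.

Theorem proposition3 :
  (forall (V : finType) (k : nat) (H : {set {set V}}),
     1 <= k -> is_hypergraph k H -> orderable k H -> separable k H) /\
  (forall (V : finType) (k : nat) (H : {set {set V}}),
     (k = 1 \/ k = 2) -> is_hypergraph k H -> separable k H -> orderable k H) /\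
  (forall k : nat, 3 <= k ->
     exists (V : finType) (H : {set {set V}}),
       [/\ is_hypergraph k H, separable k H & ~ orderable k H]).
Proof.
split; [|split].
- move=> V k H k_gt0 H_k [s [_ s_all s_ordering]].
  exact: ordering_separable s_all s_ordering k_gt0.
- move=> V k H [->|->] _ => [_|]; [exact: orderable1 | exact: separable2_orderable].
- move=> k k_ge3; exists (vertex k), (balanced k); split.
  + exact: balanced_hypergraph.
  + exact: separable_balanced.
  + exact: not_orderable_balanced.
Qed.
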